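(* Let $A<\mathbb{R}$ be any subring. Then the group $H(A)$ is inner amenable, i.e. there is a mean on $H(A)\setminus\{e\}$ invariant under conjugation by $H(A)$.
   Context: Let $\mathbb{P}^1=\mathbb{P}^1(\mathbb{R})$ with its usual topology (a circle) and the natural action of $\mathrm{PSL}_2(\mathbb{R})$. Let $G$ be the group of homeomorphisms of $\mathbb{P}^1$ which are piecewise in $\mathrm{PSL}_2(\mathbb{R})$ with finitely many pieces, each an interval. Let $\infty\in\mathbb{P}^1$ correspond to the first basis vector of $\mathbb{R}^2$ and $H<G$ its stabilizer. For a subring $A<\mathbb{R}$, $P_A$ is the set of fixed points of hyperbolic elements of $\mathrm{PSL}_2(A)$, $G(A)$ is the subgroup of $G$ of elements piecewise in $\mathrm{PSL}_2(A)$ with all interval endpoints in $P_A$, and $H(A)=G(A)\cap H$. *)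

From Stdlib Require Import Reals.
Open Scope R_scope.

(** The real projective line P^1(R): [Some x] is the point [x:1],
    [None] is infinity = [1:0] (the line of the first basis vector). *)
Definition P1 := option R.
Definition infty : P1 := None.

Definition mob (a b c d : R) (p : P1) : P1 :=
  match p with
  | Some x => if Req_EM_T (c * x + d) 0 then None
              else Some ((a * x + b) / (c * x + d))
  | None => if Req_EM_T c 0 then None else Some (a / c)
  end.

Definition nbhd (p : P1) (e : R) : P1 -> Prop :=
  match p with
  | Some x => fun q => match q with Some y => Rabs (y - x) < e | None => False end
  | None => fun q => match q with None => True | Some y => Rabs y > / e end
  end.

Definition p1_continuous (f : P1 -> P1) : Prop :=
  forall p e, 0 < e -> exists d, 0 < d /\ forall q, nbhd p d q -> nbhd (f p) e (f q).

Definition homeomorphism (f : P1 -> P1) : Prop :=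
  exists g : P1 -> P1, (forall p, g (f p) = p) /\ (forall p, f (g p) = p) /\
    p1_continuous f /\ p1_continuous g.

Definition p1_closure (S : P1 -> Prop) (p : P1) : Prop :=
  forall e, 0 < e -> exists q, nbhd p e q /\ S q.
Definition p1_interior (S : P1 -> Prop) (p : P1) : Prop :=
  exists e, 0 < e /\ forall q, nbhd p e q -> S q.
(** Endpoints of an interval = its topological boundary in P^1. *)
Definition endpoint (S : P1 -> Prop) (p : P1) : Prop :=
  p1_closure S p /\ ~ p1_interior S p.

Definition convex (X : R -> Prop) : Prop :=
  forall x y z, X x -> X z -> x <= y <= z -> X y.

(** Intervals (arcs, i.e. connected subsets) of the circle P^1: either an
    interval of R not containing infinity, or a set containing infinity whose
    complement in P^1 is an interval of R. *)
Definition arc (S : P1 -> Prop) : Prop :=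
  (~ S None /\ convex (fun x => S (Some x))) \/
  (S None /\ convex (fun x => ~ S (Some x))).

Definition subring (A : R -> Prop) : Prop :=
  A 0 /\ A 1 /\ (forall x y, A x -> A y -> A (x + y)) /\
  (forall x, A x -> A (- x)) /\ (forall x y, A x -> A y -> A (x * y)).

(** (a b; c d) in SL_2(A); its image in PSL_2(A) acts by [mob a b c d]. *)
Definition in_SL2 (A : R -> Prop) (a b c d : R) : Prop :=
  A a /\ A b /\ A c /\ A d /\ a * d - b * c = 1.

Definition P_ (A : R -> Prop) (p : P1) : Prop :=
  exists a b c d, in_SL2 A a b c d /\ Rabs (a + d) > 2 /\ mob a b c d p = p.

Definition G_ (A : R -> Prop) (f : P1 -> P1) : Prop :=
  homeomorphism f /\
  exists (n : nat) (I : nat -> P1 -> Prop) (a b c d : nat -> R),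
    (forall i, (i < n)%nat ->
       arc (I i) /\ in_SL2 A (a i) (b i) (c i) (d i) /\
       (forall p, I i p -> f p = mob (a i) (b i) (c i) (d i) p) /\
       (forall p, endpoint (I i) p -> P_ A p)) /\
    (forall i j p, (i < n)%nat -> (j < n)%nat -> I i p -> I j p -> i = j) /\
    (forall p, exists i, (i < n)%nat /\ I i p).

Definition H_ (A : R -> Prop) (f : P1 -> P1) : Prop := G_ A f /\ f infty = infty.

(** Conjugate set g E g^{-1} = { h | h ∘ g = g ∘ k for some k in E }. *)
Definition conj_set (g : P1 -> P1) (E : (P1 -> P1) -> Prop) : (P1 -> P1) -> Prop :=
  fun h => exists k, E k /\ forall p, h (g p) = g (k p).

Definition inner_amenable (Gam : (P1 -> P1) -> Prop) : Prop :=
  let D := fun h => Gam h /\ exists p, h p <> p in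
  exists m : ((P1 -> P1) -> Prop) -> R,
    (forall E, (forall h, E h -> D h) -> 0 <= m E) /\
    m D = 1 /\
    (forall E F, (forall h, E h -> D h) -> (forall h, F h -> D h) ->
       (forall h, E h -> F h -> False) ->
       m (fun h => E h \/ F h) = m E + m F) /\
    (forall g E, Gam g -> (forall h, E h -> D h) -> m (conj_set g E) = m E).

From Stdlib Require Import Reals.
From Stdlib Require Import Lra Psatz ZArith List.
From Stdlib Require Import Classical ClassicalDescription IndefiniteDescription FunctionalExtensionality.
From mathcomp Require filter.
Import ListNotations.
Open Scope R_scope.

(* For a unit [a] of [A] and [t] in [A], [phi a t] acts on the interval
   [a^2 (t + [p0, q0])] as the hyperbolic map [y |-> 3 - 1/y] in the coordinate
   [y = x / a^2 - t], and as the identity elsewhere; it is a nontrivial element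
   of H(A).  Every [g] in H(A) is affine, [x |-> a_g^2 x + s], near [+oo], so
   conjugation by [g] maps [phi a t] to [phi (a_g a) (t + s / (a_g a)^2)] as
   soon as the support lies far enough to the right.  Averaging the indicator
   of a set of elements over the [phi a t] with [(a, t)] in a large Foelner box
   of the abelian group of parameters, pushed to the right, therefore gives
   means that are almost invariant under conjugation by any given [g]; an
   ultralimit of them is invariant. *)

(** * The bump map on the real line *)

(* [p0 < 1 < q0] are the fixed points of the hyperbolic map [y |-> 3 - 1/y],
   the action of the matrix (3 -1; 1 0); it maps [p0, q0] onto itself. *)
Definition p0 := (3 - sqrt 5) / 2.
Definition q0 := (3 + sqrt 5) / 2.

Lemma sqrt5_bounds : 2 < sqrt 5 < 3 /\ sqrt 5 * sqrt 5 = 5.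
Proof.
  assert (H5 : sqrt 5 * sqrt 5 = 5) by (apply sqrt_sqrt; lra).
  pose proof (sqrt_pos 5). repeat split; nra.
Qed.

Lemma p0q0_mul : p0 * q0 = 1.
Proof. unfold p0, q0. pose proof sqrt5_bounds. nra. Qed.

Lemma p0q0_add : p0 + q0 = 3.
Proof. unfold p0, q0. lra. Qed.

Lemma p0_bounds : 0 < p0 < 1.
Proof. unfold p0. pose proof sqrt5_bounds. lra. Qed.

Lemma q0_gt1 : 1 < q0.
Proof. unfold q0. pose proof sqrt5_bounds. lra. Qed.

Lemma Rinv_p0 : / p0 = q0.
Proof. pose proof p0q0_mul; pose proof p0_bounds. field_simplify_eq; lra. Qed.

Lemma Rinv_q0 : / q0 = p0.
Proof. pose proof p0q0_mul; pose proof q0_gt1. field_simplify_eq; lra. Qed.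

Definition clamp (y : R) := Rmax p0 (Rmin y q0).

(* [y |-> 3 - 1/y] on [p0, q0] and the identity elsewhere; written through
   [clamp] so that the Lipschitz bound is a triangle inequality. *)
Definition bump (y : R) := y - clamp y + (3 - / clamp y).
Definition bump_inv (y : R) := y - clamp y + / (3 - clamp y).

Lemma clamp_cases y :
  (y <= p0 /\ clamp y = p0) \/ (q0 <= y /\ clamp y = q0) \/
  (p0 <= y <= q0 /\ clamp y = y).
Proof.
  pose proof p0_bounds; pose proof q0_gt1. unfold clamp.
  destruct (Rle_dec y p0); [left|destruct (Rle_dec q0 y); [right; left|right; right]].
  - rewrite Rmin_left, Rmax_left; lra.
  - rewrite Rmin_right, Rmax_right; lra.
  - rewrite Rmin_left, Rmax_right; lra.
Qed.

Lemma clamp_range y : p0 <= clamp y <= q0.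
Proof.
  pose proof p0_bounds; pose proof q0_gt1.
  destruct (clamp_cases y) as [[_ E]|[[_ E]|[? E]]]; rewrite E; lra.
Qed.

Lemma clamp_in y : p0 <= y <= q0 -> clamp y = y.
Proof. intros H. destruct (clamp_cases y) as [[? E]|[[? E]|[? E]]]; rewrite E; lra. Qed.

Lemma clamp_lipschitz y z : Rabs (clamp y - clamp z) <= Rabs (y - z).
Proof.
  pose proof p0_bounds; pose proof q0_gt1.
  destruct (clamp_cases y) as [[H1 E1]|[[H1 E1]|[H1 E1]]]; rewrite E1;
  destruct (clamp_cases z) as [[H3 E3]|[[H3 E3]|[H3 E3]]]; rewrite E3;
  unfold Rabs; repeat destruct Rcase_abs; lra.
Qed.

Lemma bump_out y : ~ p0 <= y <= q0 -> bump y = y.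
Proof.
  intros H. pose proof p0q0_add. unfold bump.
  destruct (clamp_cases y) as [[? ->]|[[? ->]|[? _]]]; [rewrite Rinv_p0; lra|rewrite Rinv_q0; lra|tauto].
Qed.

Lemma bump_inv_out y : ~ p0 <= y <= q0 -> bump_inv y = y.
Proof.
  intros H. pose proof p0q0_add. unfold bump_inv.
  destruct (clamp_cases y) as [[? ->]|[[? ->]|[? _]]]; [| |tauto].
  - replace (3 - p0) with q0 by lra. rewrite Rinv_q0. lra.
  - replace (3 - q0) with p0 by lra. rewrite Rinv_p0. lra.
Qed.

Lemma bump_in y : p0 <= y <= q0 -> bump y = 3 - / y.
Proof. intros H. unfold bump. rewrite clamp_in by lra. lra. Qed.

Lemma bump_inv_in y : p0 <= y <= q0 -> bump_inv y = / (3 - y).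
Proof. intros H. unfold bump_inv. rewrite clamp_in by lra. lra. Qed.

Lemma Rinv_p0q0 u : p0 <= u <= q0 -> p0 <= / u <= q0.
Proof.
  intros H. pose proof p0_bounds.
  split; [rewrite <- Rinv_q0|rewrite <- Rinv_p0]; apply Rinv_le_contravar; lra.
Qed.

Lemma bump_in_range y : p0 <= y <= q0 -> p0 <= 3 - / y <= q0.
Proof. intros H. pose proof (Rinv_p0q0 y H). pose proof p0q0_add. lra. Qed.

Lemma bump_inv_in_range y : p0 <= y <= q0 -> p0 <= / (3 - y) <= q0.
Proof. intros H. apply Rinv_p0q0. pose proof p0q0_add. lra. Qed.

Lemma bumpK y : bump_inv (bump y) = y.
Proof.
  destruct (classic (p0 <= y <= q0)) as [H|H].
  - rewrite bump_in, bump_inv_in by (auto using bump_in_range).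
    replace (3 - (3 - / y)) with (/ y) by ring. apply Rinv_inv.
  - rewrite bump_out, bump_inv_out; auto.
Qed.

Lemma bump_invK y : bump (bump_inv y) = y.
Proof.
  destruct (classic (p0 <= y <= q0)) as [H|H].
  - rewrite bump_inv_in, bump_in by (auto using bump_inv_in_range).
    rewrite Rinv_inv. ring.
  - rewrite bump_inv_out, bump_out; auto.
Qed.

Definition bump_lip := 2 + / (p0 * p0).

Lemma bump_lip_pos : 0 < bump_lip.
Proof.
  unfold bump_lip. pose proof p0_bounds.
  assert (0 < / (p0 * p0)) by (apply Rinv_0_lt_compat; nra). lra.
Qed.

Lemma Rinv_lipschitz u v : p0 <= u -> p0 <= v ->
  Rabs (/ u - / v) <= / (p0 * p0) * Rabs (u - v).
Proof.
  intros Hu Hv. pose proof p0_bounds.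
  replace (/ u - / v) with ((v - u) * / (u * v)) by (field; lra).
  rewrite Rabs_mult, Rabs_inv, Rmult_comm, (Rabs_right (u * v)), Rabs_minus_sym by nra.
  apply Rmult_le_compat_r; [apply Rabs_pos|apply Rinv_le_contravar; nra].
Qed.

Lemma clamp_correction_lipschitz (k : R -> R) y z :
  (forall u v, p0 <= u <= q0 -> p0 <= v <= q0 -> Rabs (k u - k v) <= / (p0 * p0) * Rabs (u - v)) ->
  Rabs ((y - clamp y + k (clamp y)) - (z - clamp z + k (clamp z))) <= bump_lip * Rabs (y - z).
Proof.
  intros Hk. unfold bump_lip.
  pose proof (clamp_lipschitz y z).
  pose proof (Hk _ _ (clamp_range y) (clamp_range z)).
  assert (0 <= / (p0 * p0)) by (pose proof p0_bounds; left; apply Rinv_0_lt_compat; nra).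
  replace (y - clamp y + k (clamp y) - (z - clamp z + k (clamp z)))
    with ((y - z) - (clamp y - clamp z) + (k (clamp y) - k (clamp z))) by ring.
  eapply Rle_trans; [apply Rabs_triang|].
  eapply Rle_trans; [apply Rplus_le_compat_r, Rabs_triang|].
  rewrite Rabs_Ropp. nra.
Qed.

Lemma bump_lipschitz y z : Rabs (bump y - bump z) <= bump_lip * Rabs (y - z).
Proof.
  apply (clamp_correction_lipschitz (fun u => 3 - / u)). intros u v Hu Hv.
  replace (3 - / u - (3 - / v)) with (- (/ u - / v)) by ring.
  rewrite Rabs_Ropp. apply Rinv_lipschitz; lra.
Qed.

Lemma bump_inv_lipschitz y z : Rabs (bump_inv y - bump_inv z) <= bump_lip * Rabs (y - z).
Proof.
  apply (clamp_correction_lipschitz (fun u => / (3 - u))). intros u v Hu Hv.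
  pose proof p0q0_add.
  replace (u - v) with (- ((3 - u) - (3 - v))) by ring.
  rewrite Rabs_Ropp. apply Rinv_lipschitz; lra.
Qed.

(** * Bumps as elements of H(A) *)

Definition liftR (F : R -> R) (p : P1) : P1 :=
  match p with Some x => Some (F x) | None => None end.

Lemma liftR_continuous (F : R -> R) K B : 0 < K ->
  (forall x y, Rabs (F x - F y) <= K * Rabs (x - y)) ->
  (forall x, B < Rabs x -> F x = x) -> p1_continuous (liftR F).
Proof.
  intros HK HL HB [x|] e He.
  - exists (e / K). split; [apply Rdiv_lt_0_compat; lra|].
    intros [y|] Hq; simpl in *; [|contradiction].
    eapply Rle_lt_trans; [apply HL|].
    apply Rmult_lt_reg_l with (/ K); [apply Rinv_0_lt_compat; lra|].
    rewrite <- Rmult_assoc, Rinv_l, Rmult_1_l by lra.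
    unfold Rdiv in Hq. lra.
  - set (M := Rmax B 0 + / e + 1).
    pose proof (Rmax_l B 0); pose proof (Rmax_r B 0); pose proof (Rinv_0_lt_compat e He).
    assert (HM : 0 < M) by (unfold M; lra).
    exists (/ M). split; [apply Rinv_0_lt_compat; lra|].
    intros [y|] Hq; simpl in *; [|exact I].
    rewrite Rinv_inv in Hq. unfold M in Hq. rewrite HB; lra.
Qed.

(* The bump transported to the interval [a^2 (t + [p0, q0])] by the affine
   map [y |-> a^2 (y + t)]. *)
Definition Phi (a t x : R) := a * a * (bump (x / (a * a) - t) + t).
Definition Phi_inv (a t x : R) := a * a * (bump_inv (x / (a * a) - t) + t).
Definition phi a t := liftR (Phi a t).
Definition phi_inv a t := liftR (Phi_inv a t).

Lemma affine_conj_lipschitz (F : R -> R) a t x y : a <> 0 ->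
  (forall u v, Rabs (F u - F v) <= bump_lip * Rabs (u - v)) ->
  Rabs (a * a * (F (x / (a * a) - t) + t) - a * a * (F (y / (a * a) - t) + t))
    <= bump_lip * Rabs (x - y).
Proof.
  intros Ha HF. assert (Haa : 0 < a * a) by nra.
  replace (a * a * (F (x / (a * a) - t) + t) - a * a * (F (y / (a * a) - t) + t))
    with (a * a * (F (x / (a * a) - t) - F (y / (a * a) - t))) by ring.
  rewrite Rabs_mult, (Rabs_right (a * a)) by lra.
  eapply Rle_trans; [apply Rmult_le_compat_l; [lra|apply HF]|].
  replace (x / (a * a) - t - (y / (a * a) - t)) with ((x - y) * / (a * a)) by (field; lra).
  rewrite Rabs_mult, Rabs_inv, (Rabs_right (a * a)) by lra.
  right. field. lra.
Qed.

Lemma bump_coord_far a t x : a <> 0 -> a * a * (q0 + Rabs t) < Rabs x ->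
  ~ p0 <= x / (a * a) - t <= q0.
Proof.
  intros Ha Hx Hin. assert (Haa : 0 < a * a) by nra.
  assert (Hxe : x = a * a * ((x / (a * a) - t) + t)) by (field; lra).
  rewrite Hxe, Rabs_mult, (Rabs_right (a * a)) in Hx by lra.
  pose proof (Rabs_triang (x / (a * a) - t) t) as Htri.
  rewrite (Rabs_right (x / (a * a) - t)) in Htri by (pose proof p0_bounds; lra).
  nra.
Qed.

Lemma Phi_out a t x : a <> 0 -> ~ p0 <= x / (a * a) - t <= q0 -> Phi a t x = x.
Proof. intros Ha H. unfold Phi. rewrite bump_out by auto. field. nra. Qed.

Lemma Phi_inv_out a t x : a <> 0 -> ~ p0 <= x / (a * a) - t <= q0 -> Phi_inv a t x = x.
Proof. intros Ha H. unfold Phi_inv. rewrite bump_inv_out by auto. field. nra. Qed.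

Lemma phi_continuous a t : a <> 0 -> p1_continuous (phi a t).
Proof.
  intros Ha. apply (liftR_continuous _ bump_lip (a * a * (q0 + Rabs t)) bump_lip_pos).
  - intros; apply affine_conj_lipschitz, bump_lipschitz; auto.
  - intros x Hx. apply Phi_out, bump_coord_far; auto.
Qed.

Lemma phi_inv_continuous a t : a <> 0 -> p1_continuous (phi_inv a t).
Proof.
  intros Ha. apply (liftR_continuous _ bump_lip (a * a * (q0 + Rabs t)) bump_lip_pos).
  - intros; apply affine_conj_lipschitz, bump_inv_lipschitz; auto.
  - intros x Hx. apply Phi_inv_out, bump_coord_far; auto.
Qed.

Lemma affine_conjK (F G : R -> R) a t x : a <> 0 -> (forall y, G (F y) = y) ->
  a * a * (G ((a * a * (F (x / (a * a) - t) + t)) / (a * a) - t) + t) = x.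
Proof.
  intros Ha HFG. assert (Haa : a * a <> 0) by nra.
  replace (a * a * (F (x / (a * a) - t) + t) / (a * a) - t) with (F (x / (a * a) - t))
    by (field; auto).
  rewrite HFG. field. auto.
Qed.

Lemma phi_homeomorphism a t : a <> 0 -> homeomorphism (phi a t).
Proof.
  intros Ha. exists (phi_inv a t). split; [|split; [|split]].
  - intros [x|]; simpl; f_equal. apply affine_conjK; auto using bumpK.
  - intros [x|]; simpl; f_equal. apply affine_conjK; auto using bump_invK.
  - apply phi_continuous; auto.
  - apply phi_inv_continuous; auto.
Qed.

Definition unitA (A : R -> Prop) (a : R) := A a /\ A (/ a) /\ a <> 0.

Lemma subring_nat A n : subring A -> A (INR n).
Proof. intros (H0 & H1 & Hp & _). induction n; [auto|rewrite S_INR; auto]. Qed.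

Lemma unitA_one A : subring A -> unitA A 1.
Proof. intros (_ & H1 & _). unfold unitA. rewrite Rinv_1. repeat split; auto; lra. Qed.

Lemma unitA_mul A a b : subring A -> unitA A a -> unitA A b -> unitA A (a * b).
Proof.
  intros (_ & _ & _ & _ & Hm) (Ha & Hai & Ha0) (Hb & Hbi & Hb0).
  split; [auto|split; [rewrite Rinv_mult; auto|apply Rmult_integral_contrapositive; auto]].
Qed.

Lemma unitA_inv A a : unitA A a -> unitA A (/ a).
Proof.
  intros (Ha & Hai & Ha0). rewrite <- (Rinv_inv a) in Ha.
  repeat split; auto using Rinv_neq_0_compat.
Qed.

Definition in_bump_support a t (p : P1) : Prop :=
  match p with Some x => p0 <= x / (a * a) - t <= q0 | None => False end.

Definition bump_piece a t (i : nat) : P1 -> Prop :=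
  match i with O => in_bump_support a t | _ => fun p => ~ in_bump_support a t p end.

(* [S (3 -1; 1 0) S^-1] with [S = (a^2 a^2 t; 0 1)] on the support, identity elsewhere. *)
Definition bump_mx_a t (i : nat) := match i with O => 3 + t | _ => 1 end.
Definition bump_mx_b a t (i : nat) := match i with O => - (a * a * (t * t + 3 * t + 1)) | _ => 0 end.
Definition bump_mx_c a (i : nat) := match i with O => / a * / a | _ => 0 end.
Definition bump_mx_d t (i : nat) := match i with O => - t | _ => 1 end.

Lemma bump_mx_SL2 A a t i : subring A -> unitA A a -> A t ->
  in_SL2 A (bump_mx_a t i) (bump_mx_b a t i) (bump_mx_c a i) (bump_mx_d t i).
Proof.
  intros HA (Ha & Hai & Ha0) Ht. pose proof (subring_nat A 3 HA) as H3. simpl in H3.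
  replace (1 + 1 + 1) with 3 in H3 by ring.
  destruct HA as (H0 & H1 & Hp & Hn & Hm).
  destruct i; simpl; repeat split; auto; try ring;
    repeat first [assumption | apply Hp | apply Hm | apply Hn].
  field. auto.
Qed.

Lemma mob_bump_mx a t x : a <> 0 -> p0 <= x / (a * a) - t <= q0 ->
  mob (bump_mx_a t 0) (bump_mx_b a t 0) (bump_mx_c a 0) (bump_mx_d t 0) (Some x)
  = Some (Phi a t x).
Proof.
  intros Ha Hy. simpl. pose proof p0_bounds.
  set (y := x / (a * a) - t) in *.
  assert (Hx : x = a * a * (y + t)) by (unfold y; field; nra).
  replace (/ a * / a * x + - t) with y by (rewrite Hx; field; auto).
  destruct (Req_EM_T y 0); [lra|]. f_equal.
  unfold Phi. fold y. rewrite bump_in by lra. rewrite Hx. field. auto.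
Qed.

Lemma mob_id p : mob 1 0 0 1 p = p.
Proof.
  destruct p as [x|]; simpl.
  - destruct (Req_EM_T (0 * x + 1) 0); [lra|]. f_equal. field.
  - destruct (Req_EM_T 0 0); [auto|contradiction].
Qed.

Lemma bump_fixes_ends y : y = p0 \/ y = q0 -> 3 - / y = y.
Proof. pose proof p0q0_add. intros [->| ->]; [rewrite Rinv_p0|rewrite Rinv_q0]; lra. Qed.

Lemma bump_ends_hyperbolic A a t x : subring A -> unitA A a -> A t ->
  x / (a * a) - t = p0 \/ x / (a * a) - t = q0 -> P_ A (Some x).
Proof.
  intros HA Hu Ht Hx. pose proof p0_bounds; pose proof q0_gt1.
  pose proof Hu as (_ & _ & Ha0).
  exists (bump_mx_a t 0), (bump_mx_b a t 0), (bump_mx_c a 0), (bump_mx_d t 0).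
  split; [apply bump_mx_SL2; auto|split; [simpl; rewrite Rabs_right; lra|]].
  rewrite mob_bump_mx by (auto; lra). f_equal. unfold Phi.
  rewrite bump_in, bump_fixes_ends by (auto; lra). field. auto.
Qed.

Definition locally_decided (S : P1 -> Prop) (p : P1) : Prop :=
  exists e, 0 < e /\ ((forall q, nbhd p e q -> S q) \/ (forall q, nbhd p e q -> ~ S q)).

Lemma locally_decided_not_endpoint S p : locally_decided S p -> ~ endpoint S p.
Proof.
  intros [e [He [HS|HS]]] [Hc Hi].
  - apply Hi. exists e. auto.
  - destruct (Hc e He) as [q [Hq Sq]]. exact (HS q Hq Sq).
Qed.

Lemma locally_decided_compl S p :
  locally_decided S p -> locally_decided (fun q => ~ S q) p.
Proof. intros [e [He [HS|HS]]]; exists e; split; auto. Qed.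

Lemma interval_locally_decided lo hi y y' r : 0 < r ->
  r <= Rabs (y - lo) -> r <= Rabs (y - hi) -> Rabs (y' - y) < r ->
  (lo <= y' <= hi <-> lo <= y <= hi).
Proof. intros Hr Hlo Hhi Hy. unfold Rabs in *. repeat destruct Rcase_abs; lra. Qed.

Lemma in_bump_support_locally_decided a t p : a <> 0 ->
  (forall x, p = Some x -> x / (a * a) - t <> p0 /\ x / (a * a) - t <> q0) ->
  locally_decided (in_bump_support a t) p.
Proof.
  intros Ha Hp. assert (Haa : 0 < a * a) by nra.
  destruct p as [x|].
  - set (y := x / (a * a) - t). destruct (Hp x eq_refl) as [Hlo Hhi]. fold y in Hlo, Hhi.
    set (r := Rmin (Rabs (y - p0)) (Rabs (y - q0))).
    assert (Hr : 0 < r) by (apply Rmin_glb_lt; apply Rabs_pos_lt; lra).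
    assert (Hstable : forall x', Rabs (x' - x) < a * a * r ->
              (p0 <= x' / (a * a) - t <= q0 <-> p0 <= y <= q0)).
    { intros x' Hx'. apply (interval_locally_decided p0 q0 y _ r); [exact Hr|apply Rmin_l|apply Rmin_r|].
      replace (x' / (a * a) - t - y) with ((x' - x) * / (a * a)) by (unfold y; field; lra).
      rewrite Rabs_mult, Rabs_inv, (Rabs_right (a * a)) by lra.
      apply Rmult_lt_reg_r with (a * a); auto. rewrite Rmult_assoc, Rinv_l; lra. }
    exists (a * a * r). split; [nra|].
    destruct (classic (p0 <= y <= q0)) as [Hin|Hout]; [left|right];
      intros [x'|] Hq; simpl in *; try tauto; rewrite Hstable; auto.
  - exists (/ (a * a * (q0 + Rabs t) + 1)).
    split; [apply Rinv_0_lt_compat; pose proof (Rabs_pos t); pose proof q0_gt1; nra|].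
    right. intros [x'|] Hq; simpl in *; auto.
    rewrite Rinv_inv in Hq. apply bump_coord_far; auto. lra.
Qed.

Lemma endpoint_bump_piece a t i p : a <> 0 -> endpoint (bump_piece a t i) p ->
  exists x, p = Some x /\ (x / (a * a) - t = p0 \/ x / (a * a) - t = q0).
Proof.
  intros Ha He. apply NNPP. intros Hn.
  assert (Hd : locally_decided (in_bump_support a t) p).
  { apply in_bump_support_locally_decided; auto.
    intros x Hx. split; intros E; apply Hn; exists x; auto. }
  destruct i; [|apply locally_decided_compl in Hd]; exact (locally_decided_not_endpoint _ _ Hd He).
Qed.

Lemma bump_support_convex a t : a <> 0 -> convex (fun x => p0 <= x / (a * a) - t <= q0).
Proof.
  intros Ha x y z Hx Hz Hxy. assert (0 < / (a * a)) by (apply Rinv_0_lt_compat; nra).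
  unfold Rdiv in *. split; nra.
Qed.

Lemma bump_piece_arc a t i : a <> 0 -> arc (bump_piece a t i).
Proof.
  intros Ha. destruct i; [left|right]; simpl; split; auto.
  - apply bump_support_convex; auto.
  - intros x y z Hx Hz Hxy Hy. apply NNPP in Hx; apply NNPP in Hz.
    exact (Hy (bump_support_convex a t Ha x y z Hx Hz Hxy)).
Qed.

Lemma phi_on_bump_piece a t i p : a <> 0 -> (i < 2)%nat -> bump_piece a t i p ->
  phi a t p = mob (bump_mx_a t i) (bump_mx_b a t i) (bump_mx_c a i) (bump_mx_d t i) p.
Proof.
  intros Ha Hi Hp. destruct i as [|[|i]]; [|simpl bump_mx_a|lia].
  - destruct p as [x|]; simpl in Hp; [|contradiction]. rewrite mob_bump_mx; auto.
  - simpl. rewrite mob_id. destruct p as [x|]; simpl; auto. f_equal. apply Phi_out; auto.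
Qed.

Lemma phi_in_H A a t : subring A -> unitA A a -> A t -> H_ A (phi a t).
Proof.
  intros HA Hu Ht. pose proof Hu as (_ & _ & Ha0). split; [|reflexivity].
  split; [apply phi_homeomorphism; auto|].
  exists 2%nat, (bump_piece a t), (bump_mx_a t), (bump_mx_b a t), (bump_mx_c a), (bump_mx_d t).
  split; [|split].
  - intros i Hi. split; [apply bump_piece_arc; auto|].
    split; [apply bump_mx_SL2; auto|]. split; [intros; apply phi_on_bump_piece; auto|].
    intros p Hp. destruct (endpoint_bump_piece a t i p Ha0 Hp) as [x [-> Hx]].
    apply (bump_ends_hyperbolic A a t); auto.
  - intros i j p Hi Hj Hip Hjp. destruct i as [|[|i]]; destruct j as [|[|j]]; try lia; simpl in *; tauto.
  - intros p. destruct (classic (in_bump_support a t p)); [exists 0%nat|exists 1%nat];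
    simpl; split; auto; lia.
Qed.

Lemma phi_nontrivial a t : a <> 0 -> phi a t (Some (a * a * (1 + t))) <> Some (a * a * (1 + t)).
Proof.
  intros Ha. simpl. intros H. injection H. unfold Phi.
  replace (a * a * (1 + t) / (a * a) - t) with 1 by (field; auto).
  pose proof p0_bounds; pose proof q0_gt1. rewrite bump_in, Rinv_1 by lra.
  intros H'. assert (a * a * (3 - 1 + t) - a * a * (1 + t) = 0) by lra. nra.
Qed.

(** * Germs at infinity and conjugation *)

Lemma convex_eventually (X : R -> Prop) : convex X ->
  (exists M, forall x, M < x -> X x) \/ (exists M, forall x, M < x -> ~ X x).
Proof.
  intros Hc. destruct (classic (exists M, forall x, M < x -> ~ X x)) as [H|H]; [right; auto|left].
  assert (Hu : forall M, exists x, M < x /\ X x).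
  { intros M. apply NNPP. intros Hn. apply H. exists M. intros x Hx HX. apply Hn. eauto. }
  destruct (Hu 0) as [x0 [_ Hx0]]. exists x0. intros x Hx.
  destruct (Hu x) as [x1 [Hx1 HX1]]. apply (Hc x0 x x1); auto; lra.
Qed.

Lemma arc_eventually S : arc S ->
  (exists M, forall x, M < x -> S (Some x)) \/ (exists M, forall x, M < x -> ~ S (Some x)).
Proof.
  intros [[_ Hc]|[_ Hc]]; [apply convex_eventually; auto|].
  destruct (convex_eventually _ Hc) as [[M H]|[M H]]; [right|left]; exists M; auto.
  intros x Hx. apply NNPP. auto.
Qed.

Lemma arcs_eventually (I : nat -> P1 -> Prop) n : (forall i, (i < n)%nat -> arc (I i)) ->
  exists M, forall i, (i < n)%nat ->
    (forall x, M < x -> I i (Some x)) \/ (forall x, M < x -> ~ I i (Some x)).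
Proof.
  induction n as [|n IH]; intros Ha; [exists 0; intros; lia|].
  destruct IH as [M HM]; [intros; apply Ha; lia|].
  destruct (arc_eventually (I n) (Ha n ltac:(lia))) as [[M' H]|[M' H]];
    exists (Rmax M M'); intros i Hi; pose proof (Rmax_l M M'); pose proof (Rmax_r M M');
    (destruct (Nat.eq_dec i n) as [->|Hn];
     [|destruct (HM i ltac:(lia)) as [HI|HI]; [left|right]; intros x Hx; apply HI; lra]).
  - left. intros x Hx. apply H. lra.
  - right. intros x Hx. apply H. lra.
Qed.

(* Since [a d - b c = 1], [(a x + b) / (c x + d) = a / c - 1 / (c (c x + d))]. *)
Lemma mob_bounded_near_infty a b c d : a * d - b * c = 1 -> c <> 0 ->
  exists M, forall x, M < x ->
    exists z, mob a b c d (Some x) = Some z /\ Rabs z <= Rabs (a / c) + 1.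
Proof.
  intros Hdet Hc. assert (Hac : 0 < Rabs c) by (apply Rabs_pos_lt; auto).
  pose proof (Rinv_0_lt_compat _ Hac).
  exists ((Rabs d + / Rabs c) / Rabs c). intros x Hx.
  assert (Hcx : Rabs d + / Rabs c < Rabs c * x).
  { apply Rmult_lt_compat_l with (r := Rabs c) in Hx; auto.
    replace (Rabs c * ((Rabs d + / Rabs c) / Rabs c)) with (Rabs d + / Rabs c) in Hx by (field; lra).
    exact Hx. }
  assert (Hu : / Rabs c <= Rabs (c * x + d)).
  { pose proof (Rabs_triang (c * x + d) (- d)) as Htri.
    replace (c * x + d + - d) with (c * x) in Htri by ring.
    assert (0 < x) by (pose proof (Rabs_pos d); nra).
    rewrite Rabs_mult, Rabs_Ropp, (Rabs_right x) in Htri by lra. lra. }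
  assert (Hu0 : c * x + d <> 0) by (intros E; rewrite E, Rabs_R0 in Hu; lra).
  exists (a / c - / (c * (c * x + d))). split.
  - simpl. destruct (Req_EM_T (c * x + d) 0) as [E|_]; [contradiction|].
    f_equal. field_simplify_eq; [nra|split; auto].
  - assert (Hcu : 1 <= Rabs (c * (c * x + d))).
    { rewrite Rabs_mult. apply Rmult_le_compat_l with (r := Rabs c) in Hu; [|lra].
      rewrite Rinv_r in Hu; lra. }
    assert (Rabs (/ (c * (c * x + d))) <= 1).
    { rewrite Rabs_inv, <- Rinv_1. apply Rinv_le_contravar; lra. }
    pose proof (Rabs_triang (a / c) (- / (c * (c * x + d)))) as Htri. rewrite Rabs_Ropp in Htri.
    unfold Rminus. lra.
Qed.

(* A map continuous at infinity and fixing it cannot agree near [+oo] with a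
   Moebius map sending infinity to the finite point [a / c]. *)
Lemma mob_fixing_infty_near_infty a b c d M (g : P1 -> P1) :
  a * d - b * c = 1 -> g None = None -> p1_continuous g ->
  (forall x, M < x -> g (Some x) = mob a b c d (Some x)) -> c = 0.
Proof.
  intros Hdet Hg0 Hcont Hg. apply NNPP. intros Hc.
  destruct (mob_bounded_near_infty a b c d Hdet Hc) as [M' HM'].
  set (K := Rabs (a / c) + 2). assert (HK : 0 < K) by (unfold K; pose proof (Rabs_pos (a / c)); lra).
  destruct (Hcont None (/ K) ltac:(apply Rinv_0_lt_compat; lra)) as [dl [Hdl Hq]].
  set (x := Rmax (Rmax M M') (/ dl) + 1).
  pose proof (Rmax_l (Rmax M M') (/ dl)); pose proof (Rmax_r (Rmax M M') (/ dl)).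
  pose proof (Rmax_l M M'); pose proof (Rmax_r M M').
  assert (Hidl : 0 < / dl) by (apply Rinv_0_lt_compat; auto).
  destruct (HM' x ltac:(unfold x; lra)) as [z [Hz Hzb]].
  specialize (Hq (Some x)). rewrite Hg0, Hg, Hz in Hq by (unfold x; lra). simpl in Hq.
  rewrite Rinv_inv in Hq. unfold K in Hq.
  assert (Rabs x > / dl) by (rewrite Rabs_right; unfold x; lra).
  specialize (Hq H3). lra.
Qed.

Lemma H_injective A g : H_ A g -> forall p q, g p = g q -> p = q.
Proof. intros [[[g' [Hl _]] _] _] p q H. rewrite <- (Hl p), <- (Hl q), H. reflexivity. Qed.

Lemma H_affine_near_infty A g : subring A -> H_ A g ->
  exists a s M, unitA A a /\ A s /\ forall x, M < x -> g (Some x) = Some (a * a * x + s).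
Proof.
  intros HA [[Hh [n [I [a [b [c [d [Hp [_ Hcov]]]]]]]]] Hinf].
  destruct (arcs_eventually I n) as [M HM]; [intros i Hi; apply (Hp i Hi)|].
  destruct (Hcov (Some (M + 1))) as [i [Hi HIi]].
  destruct (HM i Hi) as [Hin|Hout]; [|exfalso; apply (Hout (M + 1)); auto; lra].
  destruct (Hp i Hi) as [_ [(Ha & Hb & Hc & Hd & Hdet) [Hpc _]]].
  destruct Hh as [g' [_ [_ [Hcont _]]]].
  assert (Hg : forall x, M < x -> g (Some x) = mob (a i) (b i) (c i) (d i) (Some x))
    by (intros x Hx; apply Hpc, Hin, Hx).
  pose proof (mob_fixing_infty_near_infty _ _ _ _ M g Hdet Hinf Hcont Hg) as Hc0.
  rewrite Hc0, Rmult_0_r, Rminus_0_r in Hdet.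
  assert (Ha0 : a i <> 0) by (intros E; rewrite E in Hdet; lra).
  assert (Hdi : d i = / a i) by (field_simplify_eq; auto; lra).
  destruct HA as (_ & _ & _ & _ & Hm).
  exists (a i), (a i * b i), M. split; [|split].
  - repeat split; auto. rewrite <- Hdi; auto.
  - apply Hm; auto.
  - intros x Hx. rewrite Hg by auto. simpl. rewrite Hc0, Hdi.
    destruct (Req_EM_T (0 * x + / a i) 0) as [E|_].
    + exfalso. pose proof (Rinv_neq_0_compat _ Ha0). lra.
    + f_equal. field. auto.
Qed.

Lemma phi_conj_affine (g : P1 -> P1) ag s M a' t' :
  (forall p q, g p = g q -> p = q) -> g None = None ->
  (forall x, M < x -> g (Some x) = Some (ag * ag * x + s)) -> a' <> 0 -> ag <> 0 ->
  (forall y, p0 <= y <= q0 -> M < a' * a' * (y + t')) ->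
  forall p, phi (ag * a') (t' + s / ((ag * a') * (ag * a'))) (g p) = g (phi a' t' p).
Proof.
  intros Hinj Hg0 Hg Ha' Hag Hfar [x|]; [|simpl; rewrite Hg0; reflexivity].
  set (a := ag * a'). set (t := t' + s / (a * a)).
  assert (Ha : a <> 0) by (unfold a; apply Rmult_integral_contrapositive; auto).
  set (y := x / (a' * a') - t').
  assert (Hx : x = a' * a' * (y + t')) by (unfold y; field; auto).
  destruct (classic (p0 <= y <= q0)) as [Hin|Hout].
  - assert (HM := Hfar y Hin). rewrite <- Hx in HM. rewrite (Hg x HM).
    simpl. unfold Phi at 2. fold y. rewrite bump_in by auto.
    pose proof (bump_in_range y Hin) as Hr.
    rewrite Hg by (apply Hfar; auto). f_equal. unfold Phi.
    replace ((ag * ag * x + s) / (a * a) - t) with y by (unfold t, a; rewrite Hx; field; auto).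
    rewrite bump_in by auto. unfold t, a. field. pose proof p0_bounds. repeat split; auto; lra.
  - simpl phi at 2. rewrite Phi_out by auto.
    destruct (g (Some x)) as [z|] eqn:Hgx; [|reflexivity].
    simpl. f_equal. apply Phi_out; auto. intros Hz.
    set (yz := z / (a * a) - t) in Hz.
    assert (Hgz : g (Some (a' * a' * (yz + t'))) = Some z).
    { rewrite Hg by (apply Hfar; auto). f_equal. unfold yz, t, a. field. auto. }
    rewrite <- Hgx in Hgz. apply Hinj in Hgz. injection Hgz. intros Hxe.
    apply Hout. unfold y. rewrite <- Hxe.
    replace (a' * a' * (yz + t') / (a' * a') - t') with yz by (field; auto). auto.
Qed.

Lemma conj_set_phi A g E ag s M a t : H_ A g -> ag <> 0 ->
  (forall x, M < x -> g (Some x) = Some (ag * ag * x + s)) -> a <> 0 ->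
  (forall y, p0 <= y <= q0 -> ag * ag * M + s < a * a * (y + t)) ->
  (conj_set g E (phi a t) <-> E (phi (/ ag * a) (t - s / (a * a)))).
Proof.
  intros Hh Hag Hg Ha Hfar.
  assert (Hinj := H_injective A g Hh). assert (Hg0 : g None = None) by (destruct Hh; auto).
  assert (Ha' : / ag * a <> 0) by (apply Rmult_integral_contrapositive; auto using Rinv_neq_0_compat).
  assert (Hfar' : forall y, p0 <= y <= q0 -> M < (/ ag * a) * (/ ag * a) * (y + (t - s / (a * a)))).
  { intros y Hy. specialize (Hfar y Hy). assert (0 < ag * ag) by nra.
    replace ((/ ag * a) * (/ ag * a) * (y + (t - s / (a * a)))) with ((a * a * (y + t) - s) / (ag * ag))
      by (field; auto).
    apply Rmult_lt_reg_l with (ag * ag); auto. unfold Rdiv. field_simplify; nra. }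
  pose proof (phi_conj_affine g ag s M _ _ Hinj Hg0 Hg Ha' Hag Hfar') as Hc.
  replace (ag * (/ ag * a)) with a in Hc by (field; auto).
  replace (t - s / (a * a) + s / (a * a)) with t in Hc by ring.
  split.
  - intros [k [Ek Hk]]. replace (phi (/ ag * a) (t - s / (a * a))) with k; auto.
    apply functional_extensionality. intros p. apply Hinj. rewrite <- Hk, Hc. reflexivity.
  - intros HE. exists (phi (/ ag * a) (t - s / (a * a))). split; auto.
Qed.

(** * Foelner boxes in abelian groups *)

Lemma Rabs_le_inv x b : Rabs x <= b -> - b <= x <= b.
Proof. unfold Rabs; destruct Rcase_abs; lra. Qed.

Fixpoint sumN (n : nat) (f : nat -> R) : R :=
  match n with O => 0 | S n => sumN n f + f n end.

Lemma sumN_le n f g : (forall k, (k < n)%nat -> f k <= g k) -> sumN n f <= sumN n g.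
Proof.
  induction n; simpl; intros H; [lra|].
  pose proof (H n ltac:(lia)). assert (sumN n f <= sumN n g) by (apply IHn; intros; apply H; lia). lra.
Qed.

Lemma sumN_plus n f g : sumN n (fun k => f k + g k) = sumN n f + sumN n g.
Proof. induction n; simpl; [lra|rewrite IHn; lra]. Qed.

Lemma sumN_const n c : sumN n (fun _ => c) = INR n * c.
Proof.
  induction n; [simpl; lra|].
  change (sumN (S n) (fun _ => c)) with (sumN n (fun _ => c) + c). rewrite IHn, S_INR. lra.
Qed.

Lemma sumN_telescope n f : sumN n (fun k => f (S k)) - sumN n f = f n - f O.
Proof. induction n; simpl; lra. Qed.

Lemma sumN_close n f g eps : (forall k, (k < n)%nat -> Rabs (f k - g k) <= eps) ->
  Rabs (sumN n f - sumN n g) <= INR n * eps.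
Proof.
  intros H.
  assert (H1 : sumN n f <= sumN n (fun k => g k + eps)).
  { apply sumN_le. intros k Hk. specialize (H k Hk). apply Rabs_le_inv in H. lra. }
  assert (H2 : sumN n (fun k => g k + - eps) <= sumN n f).
  { apply sumN_le. intros k Hk. specialize (H k Hk). apply Rabs_le_inv in H. lra. }
  rewrite sumN_plus, sumN_const in H1, H2. apply Rabs_le. lra.
Qed.

Lemma INRS_pos N : 0 < INR (S N).
Proof. apply lt_0_INR. lia. Qed.

Section Box.
Variable X : Type.
Variable op : X -> X -> X.
Variable e : X.

Fixpoint power (k : nat) (c : X) : X := match k with O => e | S k => op c (power k c) end.

(* The average of [f] over the box [{c1^k1 ... cn^kn : 0 <= ki <= N}] for
   [cs = [c1; ...; cn]], counted with multiplicity and computed as an iterated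
   average; [box_elems cs N] lists the points of the box. *)
Fixpoint box_avg (cs : list X) (N : nat) (f : X -> R) : R :=
  match cs with
  | nil => f e
  | c :: cs => sumN (S N) (fun k => box_avg cs N (fun x => f (op (power k c) x))) / INR (S N)
  end.

Fixpoint box_elems (cs : list X) (N : nat) : list X :=
  match cs with
  | nil => [e]
  | c :: cs => flat_map (fun k => map (op (power k c)) (box_elems cs N)) (seq 0 (S N))
  end.

Lemma in_box_elems_cons c cs N x : In x (box_elems (c :: cs) N) <->
  exists k x', (k < S N)%nat /\ In x' (box_elems cs N) /\ x = op (power k c) x'.
Proof.
  change (box_elems (c :: cs) N)
    with (flat_map (fun k => map (op (power k c)) (box_elems cs N)) (seq 0 (S N))).
  rewrite in_flat_map. split.
  - intros [k [Hk Hx]]. apply in_seq in Hk. apply in_map_iff in Hx. destruct Hx as [x' [<- Hx']].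
    exists k, x'. repeat split; auto; lia.
  - intros [k [x' [Hk [Hx' ->]]]]. exists k. split; [apply in_seq; lia|apply in_map; auto].
Qed.

Lemma box_avg_close cs N f g eps : (forall x, In x (box_elems cs N) -> Rabs (f x - g x) <= eps) ->
  Rabs (box_avg cs N f - box_avg cs N g) <= eps.
Proof.
  revert f g. induction cs as [|c cs IH]; intros f g H; cbn [box_avg]; [apply H; simpl; auto|].
  pose proof (INRS_pos N).
  unfold Rdiv. rewrite <- Rmult_minus_distr_r, Rabs_mult, Rabs_inv, (Rabs_right (INR (S N))) by lra.
  apply Rmult_le_reg_r with (INR (S N)); auto. rewrite Rmult_assoc, Rinv_l, Rmult_1_r by lra.
  rewrite Rmult_comm. apply sumN_close. intros k Hk. apply IH. intros x Hx. apply H.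
  apply in_box_elems_cons. exists k, x. auto.
Qed.

Lemma box_avg_ext cs N f g : (forall x, In x (box_elems cs N) -> f x = g x) ->
  box_avg cs N f = box_avg cs N g.
Proof.
  intros H. assert (Hle : Rabs (box_avg cs N f - box_avg cs N g) <= 0).
  { apply box_avg_close. intros x Hx. rewrite H, Rminus_diag, Rabs_R0 by auto. lra. }
  apply Rabs_le_inv in Hle. lra.
Qed.

Lemma box_avg_range cs N f lo hi : (forall x, lo <= f x <= hi) -> lo <= box_avg cs N f <= hi.
Proof.
  revert f. induction cs as [|c cs IH]; intros f H; cbn [box_avg]; [apply H|].
  pose proof (INRS_pos N).
  assert (H1 : sumN (S N) (fun _ => lo) <= sumN (S N) (fun k => box_avg cs N (fun x => f (op (power k c) x))))
    by (apply sumN_le; intros k _; apply IH; auto).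
  assert (H2 : sumN (S N) (fun k => box_avg cs N (fun x => f (op (power k c) x))) <= sumN (S N) (fun _ => hi))
    by (apply sumN_le; intros k _; apply IH; auto).
  rewrite sumN_const in H1, H2. unfold Rdiv.
  split; apply Rmult_le_reg_r with (INR (S N)); auto; rewrite Rmult_assoc, Rinv_l by lra; lra.
Qed.

Lemma box_avg_plus cs N f g : box_avg cs N (fun x => f x + g x) = box_avg cs N f + box_avg cs N g.
Proof.
  revert f g. induction cs as [|c cs IH]; intros f g; cbn [box_avg]; [reflexivity|].
  unfold Rdiv. rewrite <- Rmult_plus_distr_r, <- sumN_plus. do 2 f_equal.
  apply functional_extensionality. intros k. apply IH.
Qed.

Lemma box_avg_const cs N c : box_avg cs N (fun _ => c) = c.
Proof.
  assert (H : c <= box_avg cs N (fun _ => c) <= c) by (apply box_avg_range; intros; lra). lra.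
Qed.

Hypothesis op_assoc : forall u v w, op u (op v w) = op (op u v) w.
Hypothesis op_comm : forall u v, op u v = op v u.

Lemma box_avg_translate cs N c f : In c cs -> (forall x, 0 <= f x <= 1) ->
  Rabs (box_avg cs N (fun x => f (op c x)) - box_avg cs N f) <= 2 / INR (S N).
Proof.
  revert f. induction cs as [|d cs IH]; intros f Hin Hf; [destruct Hin|].
  pose proof (INRS_pos N). cbn [box_avg]. unfold Rdiv. rewrite <- Rmult_minus_distr_r.
  destruct Hin as [->|Hin].
  - set (B := fun k => box_avg cs N (fun x => f (op (power k c) x))).
    replace (fun k => box_avg cs N (fun x => f (op c (op (power k c) x)))) with (fun k => B (S k)).
    2:{ apply functional_extensionality. intros k. unfold B. f_equal.
        apply functional_extensionality. intros x. simpl. rewrite op_assoc. reflexivity. }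
    fold B. rewrite sumN_telescope.
    assert (0 <= B (S N) <= 1) by (apply box_avg_range; auto).
    assert (0 <= B O <= 1) by (apply box_avg_range; auto).
    rewrite Rabs_mult, Rabs_inv, (Rabs_right (INR (S N))) by lra.
    apply Rmult_le_compat_r; [left; apply Rinv_0_lt_compat; auto|apply Rabs_le; lra].
  - replace (fun k => box_avg cs N (fun x => f (op c (op (power k d) x))))
      with (fun k => box_avg cs N (fun x => (fun y => f (op (power k d) y)) (op c x))).
    2:{ apply functional_extensionality. intros k. f_equal. apply functional_extensionality.
        intros x. rewrite !op_assoc, (op_comm c). reflexivity. }
    rewrite Rabs_mult, Rabs_inv, (Rabs_right (INR (S N))) by lra.
    apply Rmult_le_reg_r with (INR (S N)); auto. rewrite Rmult_assoc, Rinv_l, Rmult_1_r by lra.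
    replace (2 * / INR (S N) * INR (S N)) with (INR (S N) * (2 / INR (S N))) by (unfold Rdiv; ring).
    apply sumN_close. intros k _. apply (IH (fun y => f (op (power k d) y))); auto.
Qed.

End Box.

(** * Ultralimits *)

Section Ultralimit.
Context {I : Type} (U : (I -> Prop) -> Prop) {HU : filter.UltraFilter U}.

Definition ulim (x : I -> R) (r : R) := forall eps, 0 < eps -> U (fun i => Rabs (x i - r) < eps).

Lemma ultra_and P Q : U P -> U Q -> U (fun i => P i /\ Q i).
Proof. apply filter.filterI. Qed.

Lemma ultra_mono (P Q : I -> Prop) : (forall i, P i -> Q i) -> U P -> U Q.
Proof. apply filter.filterS. Qed.

Lemma ultra_all (P : I -> Prop) : (forall i, P i) -> U P.
Proof. intros HP. apply (ultra_mono (fun _ => True)); auto. apply filter.filterT. Qed.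

Lemma ultra_ex P : U P -> exists i, P i.
Proof. apply filter.filter_ex. Qed.

Lemma ulim_exists x : (forall i, 0 <= x i <= 1) -> exists r, ulim x r.
Proof.
  intros Hx. set (E := fun r => U (fun i => r <= x i)).
  assert (HE0 : E 0) by (apply ultra_all; intros; apply Hx).
  assert (Hb : bound E).
  { exists 1. intros r Hr. destruct (Rle_dec r 1) as [|n]; auto.
    destruct (ultra_ex _ Hr) as [i Hi]. pose proof (Hx i). lra. }
  destruct (completeness E Hb (ex_intro _ 0 HE0)) as [l [Hub Hlub]].
  exists l. intros eps Heps.
  assert (Hlo : U (fun i => l - eps < x i)).
  { destruct (filter.in_ultra_setVsetC (fun i => l - eps < x i) HU) as [H|H]; auto.
    assert (Hle : forall r, E r -> r <= l - eps).
    { intros r Hr. apply Rnot_lt_le. intros Hlt.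
      destruct (ultra_ex _ (ultra_and _ _ H Hr)) as [i [Hi1 Hi2]]. apply Hi1. lra. }
    specialize (Hlub (l - eps) Hle). lra. }
  assert (Hhi : U (fun i => x i < l + eps)).
  { destruct (filter.in_ultra_setVsetC (fun i => x i < l + eps) HU) as [H|H]; auto.
    assert (HE : E (l + eps)) by (revert H; apply ultra_mono; intros i h; exact (Rnot_lt_le _ _ h)).
    specialize (Hub _ HE). lra. }
  generalize (ultra_and _ _ Hlo Hhi). apply ultra_mono.
  intros i [h1 h2]. apply Rabs_def1; lra.
Qed.

Lemma ulim_choice {X : Type} (x : X -> I -> R) : (forall E i, 0 <= x E i <= 1) ->
  exists m : X -> R, forall E, ulim (x E) (m E).
Proof. intros Hx. apply (functional_choice (fun E r => ulim (x E) r)). intros E. apply ulim_exists, Hx. Qed.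

Lemma ulim_close x y r s : ulim x r -> ulim y s ->
  (forall eps, 0 < eps -> U (fun i => Rabs (x i - y i) < eps)) -> r = s.
Proof.
  intros Hr Hs Hxy. apply NNPP. intros Hne.
  set (eps := Rabs (r - s) / 4).
  assert (Heps : 0 < eps) by (unfold eps; apply Rdiv_lt_0_compat; [apply Rabs_pos_lt; lra|lra]).
  destruct (ultra_ex _ (ultra_and _ _ (Hr eps Heps) (ultra_and _ _ (Hs eps Heps) (Hxy eps Heps))))
    as [i [H1 [H2 H3]]].
  assert (Hrs : Rabs (r - s) < 3 * eps).
  { replace (r - s) with (- (x i - r) + (y i - s) + (x i - y i)) by ring.
    eapply Rle_lt_trans; [apply Rabs_triang|].
    eapply Rle_lt_trans; [apply Rplus_le_compat_r, Rabs_triang|].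
    rewrite Rabs_Ropp. lra. }
  unfold eps in Hrs. pose proof (Rabs_pos (r - s)). lra.
Qed.

Lemma ulim_unique x r s : ulim x r -> ulim x s -> r = s.
Proof.
  intros Hr Hs. apply (ulim_close x x); auto. intros eps He. apply ultra_all.
  intros i. rewrite Rminus_diag, Rabs_R0. auto.
Qed.

Lemma ulim_plus x y r s : ulim x r -> ulim y s -> ulim (fun i => x i + y i) (r + s).
Proof.
  intros Hr Hs eps Heps.
  generalize (ultra_and _ _ (Hr (eps / 2) ltac:(lra)) (Hs (eps / 2) ltac:(lra))).
  apply ultra_mono. intros i [h1 h2].
  replace (x i + y i - (r + s)) with ((x i - r) + (y i - s)) by ring.
  eapply Rle_lt_trans; [apply Rabs_triang|lra].
Qed.

Lemma ulim_nonneg x r : (forall i, 0 <= x i) -> ulim x r -> 0 <= r.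
Proof.
  intros Hx Hr. apply Rnot_lt_le. intros Hneg.
  destruct (ultra_ex _ (Hr (- r / 2) ltac:(lra))) as [i Hi].
  pose proof (Hx i). apply Rabs_def2 in Hi. lra.
Qed.

Lemma ulim_eventually_const x c : U (fun i => x i = c) -> ulim x c.
Proof.
  intros H eps Heps. revert H. apply ultra_mono.
  intros i ->. rewrite Rminus_diag, Rabs_R0. lra.
Qed.

End Ultralimit.

(** * Almost invariant means *)

Notation add_box_avg := (box_avg R Rplus 0).
Notation add_box := (box_elems R Rplus 0).
Notation mul_box_avg := (box_avg R Rmult 1).
Notation mul_box := (box_elems R Rmult 1).

Definition sum_abs (l : list R) := fold_right (fun c acc => Rabs c + acc) 0 l.
Definition sum_inv_sq (l : list R) := fold_right (fun a acc => / (a * a) + acc) 0 l.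

Lemma power_plus k c : power R Rplus 0 k c = INR k * c.
Proof. induction k; simpl power; [simpl; ring|rewrite IHk, S_INR; ring]. Qed.

Lemma sum_abs_nonneg l : 0 <= sum_abs l.
Proof. induction l; simpl; [lra|pose proof (Rabs_pos a); lra]. Qed.

Lemma inv_sq_nonneg a : 0 <= / (a * a).
Proof.
  destruct (Req_dec a 0) as [->|Ha]; [rewrite Rmult_0_r, Rinv_0; lra|].
  left. apply Rinv_0_lt_compat. nra.
Qed.

Lemma sum_inv_sq_nonneg l : 0 <= sum_inv_sq l.
Proof. induction l; simpl; [lra|pose proof (inv_sq_nonneg a); lra]. Qed.

Lemma sum_inv_sq_ge a l : In a l -> / (a * a) <= sum_inv_sq l.
Proof.
  induction l as [|b l IH]; intros H; [destruct H|]. simpl.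
  pose proof (sum_inv_sq_nonneg l); pose proof (inv_sq_nonneg b).
  destruct H as [->|H]; [lra|specialize (IH H); lra].
Qed.

Lemma add_box_bound cs N x : In x (add_box cs N) -> Rabs x <= INR N * sum_abs cs.
Proof.
  revert x. induction cs as [|c cs IH]; intros x Hx.
  - destruct Hx as [<-|[]]. rewrite Rabs_R0. simpl. lra.
  - apply in_box_elems_cons in Hx. destruct Hx as [k [x' [Hk [Hx' ->]]]].
    rewrite power_plus. specialize (IH x' Hx'). simpl sum_abs.
    eapply Rle_trans; [apply Rabs_triang|].
    rewrite Rabs_mult, (Rabs_right (INR k)) by (apply Rle_ge, pos_INR).
    assert (INR k <= INR N) by (apply le_INR; lia).
    pose proof (Rabs_pos c). nra.
Qed.

Lemma add_box_in A cs N x : subring A -> (forall c, In c cs -> A c) -> In x (add_box cs N) -> A x.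
Proof.
  intros HA. pose proof HA as (H0 & _ & Hp & _ & Hm). revert x.
  induction cs as [|c cs IH]; intros x Hc Hx; [destruct Hx as [<-|[]]; auto|].
  apply in_box_elems_cons in Hx. destruct Hx as [k [x' [Hk [Hx' ->]]]].
  rewrite power_plus. apply Hp; [apply Hm; [apply subring_nat; auto|apply Hc; simpl; auto]|].
  apply IH; auto. intros; apply Hc; simpl; auto.
Qed.

Lemma mul_box_unit A cs N x : subring A -> (forall c, In c cs -> unitA A c) ->
  In x (mul_box cs N) -> unitA A x.
Proof.
  intros HA. revert x. induction cs as [|c cs IH]; intros x Hc Hx.
  - destruct Hx as [<-|[]]. apply unitA_one; auto.
  - apply in_box_elems_cons in Hx. destruct Hx as [k [x' [Hk [Hx' ->]]]].
    apply unitA_mul; auto; [|apply IH; auto; intros; apply Hc; simpl; auto].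
    assert (Hcu : unitA A c) by (apply Hc; simpl; auto).
    clear -Hcu HA. induction k; simpl power; [apply unitA_one|apply unitA_mul]; auto.
Qed.

Definition admissible (A : R -> Prop) (Sa St : list R) :=
  (forall x, In x Sa -> unitA A x) /\ (forall x, In x St -> A x).

(* Conjugating [phi a t] by [g] translates [a] by a unit and [t]
   by [s / a^2] (lemma [conj_set_phi]), so the additive box is generated by
   all [s / a^2] ([shifts]); the integer [offset] pushes every support past
   the region where [g] is not yet affine. *)
Definition shifts (Sa St : list R) (N : nat) :=
  flat_map (fun s => map (fun a => s / (a * a)) (mul_box Sa N)) St.

Definition offset (Sa St : list R) (N : nat) :=
  INR (Z.to_nat (up (INR N * sum_abs (shifts Sa St N) + INR N * sum_inv_sq (mul_box Sa N)))).

Lemma shifts_in A Sa St N c : subring A -> admissible A Sa St -> In c (shifts Sa St N) -> A c.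
Proof.
  intros HA [Hsa Hst] Hc. unfold shifts in Hc. apply in_flat_map in Hc.
  destruct Hc as [s [Hs Hc]]. apply in_map_iff in Hc. destruct Hc as [a [<- Ha]].
  pose proof (mul_box_unit A Sa N a HA Hsa Ha) as (_ & Hai & _).
  pose proof HA as (_ & _ & _ & _ & Hm). unfold Rdiv. rewrite Rinv_mult. auto.
Qed.

Lemma offset_ge Sa St N :
  INR N * sum_abs (shifts Sa St N) + INR N * sum_inv_sq (mul_box Sa N) <= offset Sa St N.
Proof.
  unfold offset. set (r := INR N * sum_abs _ + INR N * sum_inv_sq _).
  destruct (archimed r) as [H1 _].
  assert (0 <= r).
  { unfold r. pose proof (pos_INR N). pose proof (sum_abs_nonneg (shifts Sa St N)).
    pose proof (sum_inv_sq_nonneg (mul_box Sa N)). nra. }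
  assert (0 <= up r)%Z by (apply le_IZR; lra).
  rewrite INR_IZR_INZ, Z2Nat.id by auto. lra.
Qed.

Lemma support_beyond Sa St N a t y : In a (mul_box Sa N) -> In t (add_box (shifts Sa St N) N) ->
  a <> 0 -> p0 <= y <= q0 -> INR N < a * a * (y + (offset Sa St N + t)).
Proof.
  intros Ha Ht Ha0 Hy. pose proof (offset_ge Sa St N). pose proof (sum_inv_sq_ge _ _ Ha).
  pose proof p0_bounds. pose proof (pos_INR N).
  pose proof (Rabs_le_inv _ _ (add_box_bound _ _ _ Ht)). assert (Haa : 0 < a * a) by nra.
  assert (HT : INR N * / (a * a) <= offset Sa St N + t) by nra.
  apply Rmult_le_compat_l with (r := a * a) in HT; [|lra].
  replace (a * a * (INR N * / (a * a))) with (INR N) in HT by (field; auto).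
  nra.
Qed.

Definition indicator {T} (P : T -> Prop) (h : T) : R :=
  if excluded_middle_informative (P h) then 1 else 0.

Lemma indicator_range {T} (P : T -> Prop) h : 0 <= indicator P h <= 1.
Proof. unfold indicator. destruct excluded_middle_informative; lra. Qed.

Lemma indicator_iff {T} (P Q : T -> Prop) h h' : (P h <-> Q h') -> indicator P h = indicator Q h'.
Proof. intros H. unfold indicator. do 2 destruct excluded_middle_informative; tauto. Qed.

Definition box_index := (list R * list R * nat)%type.

Definition box_mean (i : box_index) (E : (P1 -> P1) -> Prop) : R :=
  let '(Sa, St, N) := i in
  mul_box_avg Sa N (fun a => add_box_avg (shifts Sa St N) N (fun t => indicator E (phi a (offset Sa St N + t)))).

Lemma box_mean_range i E : 0 <= box_mean i E <= 1.
Proof.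
  destruct i as [[Sa St] N]. apply box_avg_range. intros a.
  apply box_avg_range. intros t. apply indicator_range.
Qed.

Lemma box_mean_add i E F : (forall h, E h -> F h -> False) ->
  box_mean i (fun h => E h \/ F h) = box_mean i E + box_mean i F.
Proof.
  intros Hd. destruct i as [[Sa St] N]. unfold box_mean.
  rewrite <- box_avg_plus. f_equal. apply functional_extensionality. intros a.
  rewrite <- box_avg_plus. f_equal. apply functional_extensionality. intros t.
  generalize (phi a (offset Sa St N + t)). intros h.
  unfold indicator; destruct (excluded_middle_informative (E h \/ F h)) as [H1|H1];
  destruct (excluded_middle_informative (E h)) as [H2|H2];
  destruct (excluded_middle_informative (F h)) as [H3|H3]; try lra;
  try (exfalso; exact (Hd h H2 H3)); tauto.
Qed.

Definition nontrivial_H (A : R -> Prop) := fun h => H_ A h /\ exists p, h p <> p.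

Lemma box_mean_nontrivial A Sa St N : subring A -> admissible A Sa St ->
  box_mean (Sa, St, N) (nontrivial_H A) = 1.
Proof.
  intros HA Hv. unfold box_mean.
  transitivity (mul_box_avg Sa N (fun _ => 1)); [|apply box_avg_const]. apply box_avg_ext. intros a Ha.
  transitivity (add_box_avg (shifts Sa St N) N (fun _ => 1)); [|apply box_avg_const].
  apply box_avg_ext. intros t Ht.
  unfold indicator. destruct excluded_middle_informative as [|Hn]; auto. exfalso. apply Hn.
  pose proof (mul_box_unit A Sa N a HA (proj1 Hv) Ha) as Hu.
  assert (At : A (offset Sa St N + t)).
  { pose proof HA as (_ & _ & Hp & _). apply Hp; [unfold offset; apply subring_nat; auto|].
    apply (add_box_in A (shifts Sa St N) N); auto. intros c Hc. apply (shifts_in A Sa St N); auto. }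
  split; [apply phi_in_H; auto|]. eexists. apply phi_nontrivial. apply Hu.
Qed.

Lemma box_mean_conj A g E ag s M Sa St N : subring A -> admissible A Sa St -> H_ A g -> ag <> 0 ->
  (forall x, M < x -> g (Some x) = Some (ag * ag * x + s)) ->
  In (/ ag) Sa -> In (- s) St -> ag * ag * M + s <= INR N ->
  Rabs (box_mean (Sa, St, N) (conj_set g E) - box_mean (Sa, St, N) E) <= 4 / INR (S N).
Proof.
  intros HA Hv Hg Hag Hgerm Hsa Hst HN. unfold box_mean.
  set (C := shifts Sa St N). set (T := offset Sa St N).
  set (F := fun a' => add_box_avg C N (fun t => indicator E (phi a' (T + t)))).
  set (conjugated := mul_box_avg Sa N (fun a =>
         add_box_avg C N (fun t => indicator E (phi (/ ag * a) (T + ((- s) / (a * a) + t)))))).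
  assert (Hconj : mul_box_avg Sa N (fun a => add_box_avg C N (fun t => indicator (conj_set g E) (phi a (T + t))))
                  = conjugated).
  { apply box_avg_ext. intros a Ha. apply box_avg_ext. intros t Ht. apply indicator_iff.
    pose proof (mul_box_unit A Sa N a HA (proj1 Hv) Ha) as (_ & _ & Ha0).
    replace (T + (- s / (a * a) + t)) with (T + t - s / (a * a)) by (field; auto).
    apply (conj_set_phi A g E ag s M a (T + t) Hg Hag Hgerm Ha0).
    intros y Hy. pose proof (support_beyond Sa St N a t y Ha Ht Ha0 Hy) as Hbeyond.
    fold T in Hbeyond. lra. }
  assert (Hadd : Rabs (conjugated - mul_box_avg Sa N (fun a => F (/ ag * a))) <= 2 / INR (S N)).
  { apply box_avg_close. intros a Ha. unfold F.
    apply (box_avg_translate R Rplus 0 (fun u v w => eq_sym (Rplus_assoc u v w)) Rplus_comm C N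
             ((- s) / (a * a)) (fun t' => indicator E (phi (/ ag * a) (T + t')))).
    - unfold C, shifts. apply in_flat_map. exists (- s). split; auto. apply in_map_iff. eauto.
    - intros; apply indicator_range. }
  assert (Hmul : Rabs (mul_box_avg Sa N (fun a => F (/ ag * a)) - mul_box_avg Sa N F) <= 2 / INR (S N)).
  { apply (box_avg_translate R Rmult 1 (fun u v w => eq_sym (Rmult_assoc u v w)) Rmult_comm Sa N (/ ag) F); auto.
    intros a. unfold F. apply box_avg_range. intros; apply indicator_range. }
  fold F. rewrite Hconj.
  pose proof (Rabs_triang (conjugated - mul_box_avg Sa N (fun a => F (/ ag * a)))
                          (mul_box_avg Sa N (fun a => F (/ ag * a)) - mul_box_avg Sa N F)).
  replace (conjugated - mul_box_avg Sa N F)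
    with ((conjugated - mul_box_avg Sa N (fun a => F (/ ag * a)))
          + (mul_box_avg Sa N (fun a => F (/ ag * a)) - mul_box_avg Sa N F)) by ring.
  pose proof (INRS_pos N).
  replace (4 / INR (S N)) with (2 / INR (S N) + 2 / INR (S N)) by (field; lra).
  lra.
Qed.

Lemma nat_above r : exists n : nat, r < INR n.
Proof.
  exists (Z.to_nat (up r)). destruct (archimed r) as [Hup _].
  destruct (Z_le_gt_dec 0 (up r)).
  - rewrite INR_IZR_INZ, Z2Nat.id by auto. lra.
  - assert (IZR (up r) < 0) by (apply IZR_lt; lia). pose proof (pos_INR (Z.to_nat (up r))). lra.
Qed.

Definition box_filter (A : R -> Prop) (P : box_index -> Prop) := exists Sa0 St0 N0,
  admissible A Sa0 St0 /\
  forall Sa St N, incl Sa0 Sa -> incl St0 St -> (N0 <= N)%nat -> admissible A Sa St -> P (Sa, St, N).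

Lemma admissible_app A Sa St Sa' St' :
  admissible A Sa St -> admissible A Sa' St' -> admissible A (Sa ++ Sa') (St ++ St').
Proof.
  intros [H1 H2] [H3 H4]. split; intros x Hx; apply in_app_or in Hx; destruct Hx; auto.
Qed.

Lemma box_filter_proper A : filter.ProperFilter (box_filter A).
Proof.
  constructor; [|constructor].
  - intros [Sa0 [St0 [N0 [Hv H]]]]. exact (H Sa0 St0 N0 (incl_refl _) (incl_refl _) (le_n _) Hv).
  - exists [], [], 0%nat. split; [split; intros ? []|]. intros; exact I.
  - intros P Q [Sa0 [St0 [N0 [Hv HP]]]] [Sa1 [St1 [N1 [Hv' HQ]]]].
    exists (Sa0 ++ Sa1), (St0 ++ St1), (Nat.max N0 N1). split; [apply admissible_app; auto|].
    intros Sa St N Hsa Hst HN Hv''.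
    split; [apply HP|apply HQ]; auto; try lia;
      intros x Hx; [apply Hsa|apply Hst|apply Hsa|apply Hst]; apply in_or_app; auto.
  - intros P Q HPQ [Sa0 [St0 [N0 [Hv HP]]]]. exists Sa0, St0, N0. split; auto.
Qed.

Lemma box_filter_nontrivial A : subring A ->
  box_filter A (fun i => box_mean i (nontrivial_H A) = 1).
Proof.
  intros HA. exists [], [], 0%nat. split; [split; intros ? []|].
  intros Sa St N _ _ _ Hv. apply box_mean_nontrivial; auto.
Qed.

Lemma box_filter_conj A g E eps : subring A -> H_ A g -> 0 < eps ->
  box_filter A (fun i => Rabs (box_mean i (conj_set g E) - box_mean i E) < eps).
Proof.
  intros HA Hg Heps.
  destruct (H_affine_near_infty A g HA Hg) as [ag [s [M [Hag [Hs Hgerm]]]]].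
  destruct (nat_above (ag * ag * M + s)) as [n0 Hn0].
  destruct (nat_above (4 / eps)) as [n1 Hn1].
  exists [/ ag], [- s], (Nat.max n0 n1). split.
  - split; intros x [<-|[]]; [apply unitA_inv; auto|destruct HA as (_ & _ & _ & Hn & _); auto].
  - intros Sa St N Hsa Hst HN Hv.
    assert (INR n0 <= INR N) by (apply le_INR; lia).
    assert (INR n1 <= INR N) by (apply le_INR; lia).
    destruct Hag as (_ & _ & Hag0).
    eapply Rle_lt_trans.
    { apply (box_mean_conj A g E ag s M Sa St N); auto; [apply Hsa|apply Hst|]; simpl; auto; lra. }
    assert (H4 : 4 < eps * INR n1).
    { apply Rmult_lt_compat_l with (r := eps) in Hn1; auto.
      replace (eps * (4 / eps)) with 4 in Hn1 by (field; lra). exact Hn1. }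
    pose proof (INRS_pos N). rewrite S_INR in *.
    unfold Rdiv. apply Rmult_lt_reg_r with (INR N + 1); [lra|].
    rewrite Rmult_assoc, Rinv_l, Rmult_1_r by lra. nra.
Qed.

Theorem proposition2 (A : R -> Prop) (hA : subring A) : inner_amenable (H_ A).
Proof.
  destruct (filter.ultraFilterLemma (box_filter_proper A)) as [U [HU Hsub]].
  destruct (ulim_choice U (fun E i => box_mean i E) (fun E i => box_mean_range i E)) as [m Hm].
  exists m. split; [|split; [|split]].
  - intros E _. apply (ulim_nonneg U (fun i => box_mean i E)); auto.
    intros; apply box_mean_range.
  - apply (ulim_unique U (fun i => box_mean i (nontrivial_H A))); auto.
    apply ulim_eventually_const; auto. apply Hsub, box_filter_nontrivial; auto.
  - intros E F _ _ Hd. apply (ulim_unique U (fun i => box_mean i (fun h => E h \/ F h))); auto.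
    replace (fun i => box_mean i (fun h => E h \/ F h)) with (fun i => box_mean i E + box_mean i F)
      by (apply functional_extensionality; intros; rewrite box_mean_add; auto).
    apply ulim_plus; auto.
  - intros g E Hg _. apply (ulim_close U (fun i => box_mean i (conj_set g E)) (fun i => box_mean i E)); auto.
    intros eps Heps. apply Hsub, box_filter_conj; auto.
Qed.
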